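(* For each $i\in\{1,2,3\}$ the points $P_i$, $P_i'$ and $C_2$ are collinear. Consequently the triangles $T=P_1P_2P_3$ and $T'=P_1'P_2'P_3'$ are perspective with perspector $C_2$.
   Context: Let $a>b>0$ and $c>0$ with $c^2=a^2-b^2$. Let $\mathcal{E}$ be the ellipse $x^2/a^2+y^2/b^2=1$, parametrized by $P(t)=(a\cos t,b\sin t)$. Fix $u\in\mathbb{R}$, let $M=(a\cos u,b\sin u)$ and $\Delta_u(t)=(x_u(t),y_u(t))$, where $x_u(t)=\frac1a\big(c^2(1+\cos(t+u))\cos t-a^2\cos u\big)$ and $y_u(t)=\frac1b\big(c^2\cos t\sin(t+u)-c^2\sin t-a^2\sin u\big)$ (the negative pedal curve of $\mathcal{E}$ with respect to $M$). For $i=1,2,3$ let $t_i=-u/3-2\pi(i-1)/3$, $P_i=P(t_i)$, $P_i'=\Delta_u(t_i)$ (the cusps). Let $C_2=\left(-\frac{a^2+b^2}{2a}\cos u,-\frac{a^2+b^2}{2b}\sin u\right)$ (the area centroid of $\Delta_u$). *)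

From Stdlib Require Import Reals.
Open Scope R_scope.

Definition pt := (R * R)%type.

Definition collinear (A B C : pt) : Prop :=
  (fst B - fst A) * (snd C - snd A) - (snd B - snd A) * (fst C - fst A) = 0.

Definition ellP (a b t : R) : pt := (a * cos t, b * sin t).

(* The negative pedal curve Delta_u(t) of the ellipse w.r.t. M = P(u), c^2 = a^2 - b^2. *)
Definition negpedal (a b c u t : R) : pt :=
  ((c ^ 2 * (1 + cos (t + u)) * cos t - a ^ 2 * cos u) / a,
   (c ^ 2 * cos t * sin (t + u) - c ^ 2 * sin t - a ^ 2 * sin u) / b).

Definition cusp_t (u : R) (i : nat) : R :=
  - u / 3 - 2 * PI * INR (i - 1) / 3.

(* Area centroid C_2 of Delta_u. *)
Definition C2 (a b u : R) : pt :=
  (- (a ^ 2 + b ^ 2) / (2 * a) * cos u, - (a ^ 2 + b ^ 2) / (2 * b) * sin u).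

From Stdlib Require Import Reals Lra.
Open Scope R_scope.

(* Write t = t_i.  By definition of the cusp parameters,
   u + 2 (i-1) pi = -3 t, so by 2 pi-periodicity every trigonometric
   quantity in P(t), Delta_u(t) and C_2 becomes a polynomial in
   x = cos t and y = sin t:
     cos u = cos 3t = 4x^3 - 3x,            sin u = -sin 3t = -(3y - 4y^3),
     cos (t+u) = cos 2t = 2x^2 - 1,         sin (t+u) = -sin 2t = -2xy.
   After these substitutions (and c^2 = a^2 - b^2), the collinearity
   determinant of P, Delta_u(t), C_2 is a rational function of a, b, x, y
   whose numerator is divisible by x^2 + y^2 - 1, hence vanishes on the
   unit circle. *)

Lemma cos_3a (x : R) : cos (3 * x) = 4 * cos x ^ 3 - 3 * cos x.
Proof.
  replace (3 * x) with (2 * x + x) by ring.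
  rewrite cos_plus, cos_2a, sin_2a.
  pose proof (sin2_cos2 x) as pyth; unfold Rsqr in pyth.
  replace (4 * cos x ^ 3 - 3 * cos x)
    with (4 * cos x ^ 3 - 3 * cos x * (sin x * sin x + cos x * cos x))
    by (rewrite pyth; ring).
  ring.
Qed.

Lemma sin_3a (x : R) : sin (3 * x) = 3 * sin x - 4 * sin x ^ 3.
Proof.
  replace (3 * x) with (2 * x + x) by ring.
  rewrite sin_plus, cos_2a, sin_2a.
  pose proof (sin2_cos2 x) as pyth; unfold Rsqr in pyth.
  replace (3 * sin x - 4 * sin x ^ 3)
    with (3 * sin x * (sin x * sin x + cos x * cos x) - 4 * sin x ^ 3)
    by (rewrite pyth; ring).
  ring.
Qed.

Lemma cusp_t_spec (u : R) (i : nat) :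
  u + 2 * INR (i - 1) * PI = - (3 * cusp_t u i).
Proof. unfold cusp_t; field. Qed.

Section AngleReduction.
Variables (t u : R) (k : nat).
Hypothesis Hrel : u + 2 * INR k * PI = - (3 * t).

Lemma cos_reduced : cos u = 4 * cos t ^ 3 - 3 * cos t.
Proof. rewrite <- (cos_period u k), Hrel, cos_neg; apply cos_3a. Qed.

Lemma sin_reduced : sin u = - (3 * sin t - 4 * sin t ^ 3).
Proof. rewrite <- (sin_period u k), Hrel, sin_neg, sin_3a; reflexivity. Qed.

Let Hsum : t + u + 2 * INR k * PI = - (2 * t).
Proof. lra. Qed.

Lemma cos_sum_reduced : cos (t + u) = 2 * cos t ^ 2 - 1.
Proof.
  rewrite <- (cos_period _ k), Hsum, cos_neg, cos_2a_cos; ring.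
Qed.

Lemma sin_sum_reduced : sin (t + u) = - (2 * cos t * sin t).
Proof.
  rewrite <- (sin_period _ k), Hsum, sin_neg, sin_2a; ring.
Qed.
End AngleReduction.

(* The
   numerator of the determinant is an explicit multiple of x^2 + y^2 - 1. *)
Lemma collinear_cusp_polynomial (a b x y : R) :
  a <> 0 -> b <> 0 -> x ^ 2 + y ^ 2 = 1 ->
  collinear
    (a * x, b * y)
    (((a ^ 2 - b ^ 2) * (1 + (2 * x ^ 2 - 1)) * x - a ^ 2 * (4 * x ^ 3 - 3 * x)) / a,
     ((a ^ 2 - b ^ 2) * x * (- (2 * x * y)) - (a ^ 2 - b ^ 2) * y
        - a ^ 2 * (- (3 * y - 4 * y ^ 3))) / b)
    (- (a ^ 2 + b ^ 2) / (2 * a) * (4 * x ^ 3 - 3 * x),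
     - (a ^ 2 + b ^ 2) / (2 * b) * (- (3 * y - 4 * y ^ 3))).
Proof.
  intros ha hb circle; unfold collinear; simpl.
  field_simplify; [| auto ..].
  match goal with |- ?N / _ = 0 =>
    replace N with ((x ^ 2 + y ^ 2 - 1)
                    * (a ^ 4 * (-8 * x ^ 3 * y - 4 * x * y)
                       + a ^ 2 * b ^ 2 * (4 * x * y) + b ^ 4 * (8 * x ^ 3 * y)))
      by ring
  end.
  replace (x ^ 2 + y ^ 2 - 1) with 0 by lra.
  unfold Rdiv; ring.
Qed.

Theorem proposition8p2 (a b c u : R) :
  a > b -> b > 0 -> c > 0 -> c ^ 2 = a ^ 2 - b ^ 2 ->
  forall i : nat, (1 <= i <= 3)%nat ->
    collinear (ellP a b (cusp_t u i)) (negpedal a b c u (cusp_t u i)) (C2 a b u).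
Proof.
  intros hab hb _ hc2 i _.
  pose proof (cusp_t_spec u i) as Hrel.
  set (t := cusp_t u i) in *.
  unfold ellP, negpedal, C2.
  rewrite (cos_reduced t u _ Hrel), (sin_reduced t u _ Hrel),
          (cos_sum_reduced t u _ Hrel), (sin_sum_reduced t u _ Hrel), hc2.
  apply collinear_cusp_polynomial; try lra.
  rewrite <- (sin2_cos2 t); unfold Rsqr; ring.
Qed.
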